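(* Suppose $n_1,n_2,n_3,\dots$ is a sequence of positive integers with $\lim_{i\to\infty}n_i=\infty$. Then $\bigcap_{i=1}^\infty I\Lambda_{n_i}=0$.
   Context: $I\Lambda_n$ is the ideal of $\mathbb{Z}[x_1,\dots,x_n]$ generated by the polynomials that are symmetric in $x_1,\dots,x_n$ and have zero constant term; all these ideals are regarded as subsets of $\mathbb{Z}[x_1,x_2,\dots]$. *)

From HB Require Import structures.
From mathcomp Require Import all_boot all_order all_algebra.
From mathcomp Require Import mpoly.
Set Implicit Arguments. Unset Strict Implicit. Unset Printing Implicit Defensive.
Import Order.TTheory GRing.Theory Num.Theory.
Local Open Scope ring_scope.

(* Variables x_1, x_2, ... are indexed from 0: x_(i+1) is 'X_i.
   A polynomial of Z[x_1,x_2,...] involving only x_1..x_N is an element of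
   {mpoly int[N]}; the natural inclusion Z[x_1..x_n] -> Z[x_1..x_m] (n <= m)
   is [widen_mpoly]. *)
Definition widen_mpoly (n m : nat) (H : (n <= m)%N) (p : {mpoly int[n]})
  : {mpoly int[m]} :=
  comp_mpoly [tuple ('X_(widen_ord H i) : {mpoly int[m]}) | i < n] p.

(* Two polynomials (with different numbers of variables) are equal as
   elements of Z[x_1,x_2,...]: compare them in Z[x_1..x_(N+n)]. *)
Definition same_poly (N n : nat) (p : {mpoly int[N]}) (q : {mpoly int[n]}) :=
  widen_mpoly (leq_addr n N) p = widen_mpoly (leq_addl N n) q.

Definition ILambda (n : nat) (q : {mpoly int[n]}) : Prop :=
  exists (k : nat) (c g : 'I_k -> {mpoly int[n]}),
    (forall j, g j \is symmetric /\ (g j)@_(0%MM) = 0) /\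
    q = \sum_(j < k) c j * g j.

Definition in_ILambda (n N : nat) (p : {mpoly int[N]}) : Prop :=
  exists q : {mpoly int[n]}, ILambda q /\ same_poly p q.

(* Take m > deg p, a primitive m-th root of unity w, and n := ns I >= N m.
   Substituting w^a y_r for the variable of index a N + r (a < m, r < N)
   and 0 for the others sends p to itself. Shifting the first N m variable
   indices cyclically by N turns this substitution into its composite with
   the dilation y -> w y, so the image of a symmetric polynomial is
   dilation invariant: its monomials have degree divisible by m. Hence the
   image of I Lambda_n has no monomial of degree < m, whereas every monomial
   of p has degree < m. *)

From HB Require Import structures.
From mathcomp Require Import all_boot all_order all_algebra algC cyclotomic.
From mathcomp Require Import perm mpoly zify.
Set Implicit Arguments. Unset Strict Implicit. Unset Printing Implicit Defensive.
Import Order.TTheory GRing.Theory Num.Theory.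
Local Open Scope ring_scope.

Lemma eq_mmap n (R S : nzRingType) (f f' : R -> S) (h h' : 'I_n -> S) :
  f =1 f' -> h =1 h' -> mmap f h =1 mmap f' h'.
Proof.
by move=> eq_f eq_h p; apply: eq_bigr => m _; rewrite eq_f (mmap1_eq _ eq_h).
Qed.

Lemma rmorph_mmap n (R : nzRingType) (S T : comNzRingType) (f : R -> S)
    (h : 'I_n -> S) (g : {rmorphism S -> T}) (p : {mpoly R[n]}) :
  g (mmap f h p) = mmap (g \o f) (g \o h) p.
Proof.
rewrite rmorph_sum; apply: eq_bigr => m _.
by rewrite rmorphM rmorph_prod; congr (_ * _); apply: eq_bigr => i _; rewrite rmorphXn.
Qed.

Lemma mmap1_vars0 n (R : comNzRingType) (m : 'X_{1..n}) :
  mmap1 (fun=> 0 : R) m = (m == 0%MM)%:R.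
Proof.
have [->|/eqP nz_m] := eqVneq m 0%MM; first exact: mmap11.
have [i m_i_gt0] : exists i, (0 < m i)%N.
  apply/existsP; apply: contra_notT nz_m; rewrite negb_exists => /forallP m0.
  by apply/mnmP => i; rewrite mnm0E; apply/eqP; rewrite -leqn0 leqNgt m0.
by rewrite /mmap1 (bigD1 i) //= expr0n eqn0Ngt m_i_gt0 mul0r.
Qed.

Lemma mmap_vars0 n (R : nzRingType) (S : comNzRingType) (f : {rmorphism R -> S})
    (p : {mpoly R[n]}) :
  mmap f (fun=> 0) p = f p@_0%MM.
Proof.
rewrite /mmap; under eq_bigr do rewrite mmap1_vars0.
have [p0|p0N] := boolP (0%MM \in msupp p).
  rewrite (bigD1_seq 0%MM) ?msupp_uniq //= eqxx mulr1 big1 ?addr0 // => m.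
  by move=> /negbTE ->; rewrite mulr0.
rewrite memN_msupp_eq0 // rmorph0 big1_seq // => m /andP[_ pm].
have /negbTE -> : m != 0%MM by apply: contraNneq p0N => <-.
by rewrite mulr0.
Qed.

Section Dilation.
Variables (n : nat) (R : comNzRingType) (c : R).

Definition dilate : {mpoly R[n]} -> {mpoly R[n]} :=
  mmap (@mpolyC n R) (fun i => c *: 'X_i).

HB.instance Definition _ := GRing.RMorphism.copy dilate
  (mmap (@mpolyC n R) (fun i => c *: 'X_i)).
Arguments dilate : simpl never.

Lemma dilateZ a (r : {mpoly R[n]}) : dilate (a *: r) = a *: dilate r.
Proof. by rewrite /dilate mmapZ mul_mpolyC. Qed.

Lemma dilateXU i : dilate 'X_i = c *: 'X_i.
Proof. by rewrite /dilate mmapX mmap1U. Qed.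

Lemma dilateX m : dilate 'X_[m] = c ^+ mdeg m *: 'X_[m].
Proof.
rewrite /dilate mmapX /mmap1 mpolyXE_id mdegE -prodrXr -scaler_prod.
by apply: eq_bigr => i _; rewrite exprZn.
Qed.

Lemma mcoeff_dilate r b : (dilate r)@_b = c ^+ mdeg b * r@_b.
Proof.
rewrite [in LHS](mpolyE r) (raddf_sum dilate) /=.
rewrite [in RHS](mpolyE r) !raddf_sum mulr_sumr /=.
apply: eq_bigr => m _; rewrite dilateZ dilateX scalerA !mcoeffZ mcoeffX.
by case: eqP => [->|_]; rewrite ?mulr0 ?mulr1 // mulrC.
Qed.

End Dilation.

Section VanishBelow.
Variables (n : nat) (R : nzRingType).

Definition vanish_below (d : nat) (r : {mpoly R[n]}) :=
  forall b, (mdeg b < d)%N -> r@_b = 0.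

Lemma vanish_belowMl d a r : vanish_below d r -> vanish_below d (a * r).
Proof.
move=> r_d b lt_bd; rewrite mcoeffM big1 // => -[b1 b2] /= /eqP eq_b.
have /(congr1 mdeg) := eq_b; rewrite mdegD => deg_b.
by rewrite r_d ?mulr0 //; lia.
Qed.

Lemma vanish_below_sum d I (s : seq I) (F : I -> {mpoly R[n]}) :
  (forall i, vanish_below d (F i)) -> vanish_below d (\sum_(i <- s) F i).
Proof. by move=> F_d b lt_bd; rewrite raddf_sum big1 // => i _; apply: F_d. Qed.

Lemma vanish_below_msize_eq0 r : vanish_below (msize r) r -> r = 0.
Proof.
move=> r_d; apply/mpolyP => b; rewrite mcoeff0.
have [/msize_mdeg_lt|/memN_msupp_eq0 //] := boolP (b \in msupp r).
exact: r_d.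
Qed.

End VanishBelow.

Lemma vanish_below_dilate_fixed n (R : idomainType) m (c : R) (r : {mpoly R[n]}) :
  m.-primitive_root c -> dilate c r = r -> r@_0%MM = 0 -> vanish_below m r.
Proof.
move=> c_prim fix_r r0 b lt_bm.
have [/eqP|deg_gt0] := posnP (mdeg b); first by rewrite mdeg_eq0 => /eqP ->.
have c_neq1 : c ^+ mdeg b != 1.
  by rewrite -(prim_order_dvd c_prim); apply: contraTN lt_bm => /(dvdn_leq deg_gt0); lia.
have : (c ^+ mdeg b - 1) * r@_b = 0 by rewrite mulrBl mul1r -mcoeff_dilate fix_r subrr.
by move/eqP; rewrite mulf_eq0 subr_eq0 (negbTE c_neq1) => /eqP.
Qed.

Section RootSubst.
Variables (F : idomainType) (n m : nat) (w : F).
Hypothesis w_prim : m.-primitive_root w.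
Local Notation M := (n * m)%N.

Definition root_subst_var (j : nat) : {mpoly F[n]} :=
  if (j < M)%N then
    if insub (j %% n)%N is Some i then w ^+ (j %/ n)%N *: 'X_i else 0
  else 0.

Definition root_subst k : {mpoly int[k]} -> {mpoly F[n]} :=
  mmap intr (fun i : 'I_k => root_subst_var i).

HB.instance Definition _ k := GRing.RMorphism.copy (@root_subst k)
  (mmap intr (fun i : 'I_k => root_subst_var i)).
Arguments root_subst : simpl never.

Lemma root_substC k a : root_subst (a%:MP : {mpoly int[k]}) = a%:~R.
Proof. exact: mmapC. Qed.

Lemma root_substXU k (i : 'I_k) : root_subst 'X_i = root_subst_var i.
Proof. by rewrite /root_subst mmapX mmap1U. Qed.

Definition shift_var (j : nat) : nat :=
  if (j + n < M)%N then (j + n)%N else if (j < M)%N then (j + n - M)%N else j.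

Lemma leq_nM : (n <= M)%N.
Proof. exact/leq_pmulr/(prim_order_gt0 w_prim). Qed.

Lemma shift_var_inj : injective shift_var.
Proof. by move=> a b; have := leq_nM; rewrite /shift_var; repeat case: ifP; lia. Qed.

Lemma shift_var_lt k j : (M <= k)%N -> (j < k)%N -> (shift_var j < k)%N.
Proof. by have := leq_nM; rewrite /shift_var; repeat case: ifP; lia. Qed.

Lemma root_subst_var_shift j : root_subst_var (shift_var j) = w *: root_subst_var j.
Proof.
have le_nM := leq_nM; rewrite /shift_var /root_subst_var.
have [lt_jnM|le_Mjn] := ltnP (j + n) M.
  have n_gt0 : (0 < n)%N by move: lt_jnM; rewrite lt0n; apply: contraTneq => ->.
  rewrite lt_jnM ifT; last by lia.
  rewrite [(j + n)%N]addnC -[in (n + j)%N](mul1n n) divnMDl // modnMDl.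
  by case: insub => [i|]; rewrite ?scaler0 // scalerA exprS.
have [lt_jM|le_Mj] := ltnP j M.
  2: by rewrite ltnNge (leq_trans le_Mj) ?leq_addr // scaler0.
have m_gt0 := prim_order_gt0 w_prim.
set r := (j + n - M)%N.
have lt_rn : (r < n)%N by lia.
have def_j : j = (m.-1 * n + r)%N.
  have : M = (m.-1 * n + n)%N by rewrite -mulSnr prednK // mulnC.
  lia.
rewrite (leq_trans lt_rn) // [in RHS]def_j divnMDl ?modnMDl; last by lia.
rewrite divn_small ?modn_small // addn0.
case: insub => [i|]; rewrite ?scaler0 //.
by rewrite scalerA -exprS prednK // (prim_expr_order w_prim).
Qed.

Lemma dilate_root_subst_var j : dilate w (root_subst_var j) = w *: root_subst_var j.
Proof.
rewrite /root_subst_var; case: ifP => _; last by rewrite rmorph0 scaler0.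
by case: insub => [i|]; rewrite ?rmorph0 ?scaler0 // dilateZ dilateXU !scalerA mulrC.
Qed.

Section ShiftPerm.
Variables (k : nat) (le_Mk : (M <= k)%N).

Definition shift_ord (j : 'I_k) : 'I_k := Ordinal (shift_var_lt le_Mk (ltn_ord j)).

Lemma shift_ord_inj : injective shift_ord.
Proof. by move=> a b /(congr1 val) /shift_var_inj /val_inj. Qed.

Definition shift_perm : {perm 'I_k} := perm shift_ord_inj.

Lemma dilate_root_subst (g : {mpoly int[k]}) :
  g \is symmetric -> dilate w (root_subst g) = root_subst g.
Proof.
move=> /issymP g_sym; rewrite -[in RHS](g_sym shift_perm) /msym.
rewrite (rmorph_mmap _ _ (dilate w)) (rmorph_mmap _ _ (@root_subst k)).
apply: eq_mmap => [a|i] /=; first by rewrite rmorph_int root_substC.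
by rewrite dilate_root_subst_var root_substXU permE /= root_subst_var_shift.
Qed.

End ShiftPerm.

Lemma mcoeff0_root_subst k (g : {mpoly int[k]}) : (root_subst g)@_0%MM = (g@_0%MM)%:~R.
Proof.
rewrite (rmorph_mmap _ _ (mcoeff 0%MM)) -(mmap_vars0 intr).
apply: eq_mmap => [a|i] /=; first by rewrite rmorph_int.
rewrite /root_subst_var; case: ifP => _; last exact: mcoeff0.
case: insub => [j|]; last exact: mcoeff0.
by rewrite mcoeffZ mcoeffX -mdeg_eq0 mdeg1 mulr0.
Qed.

Lemma vanish_below_root_subst k (q : {mpoly int[k]}) :
  (M <= k)%N -> ILambda q -> vanish_below m (root_subst q).
Proof.
move=> le_Mk [l [a [g [g_sym0 ->]]]].
rewrite rmorph_sum; apply: vanish_below_sum => j; rewrite rmorphM.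
apply: vanish_belowMl; have [g_sym g0] := g_sym0 j.
apply: (vanish_below_dilate_fixed w_prim); first exact: dilate_root_subst.
by rewrite mcoeff0_root_subst g0.
Qed.

Lemma root_subst_widen k l (le_kl : (k <= l)%N) (q : {mpoly int[k]}) :
  root_subst (widen_mpoly le_kl q) = root_subst q.
Proof.
rewrite /widen_mpoly /comp_mpoly (rmorph_mmap _ _ (@root_subst l)).
by apply: eq_mmap => [a|i] /=; rewrite ?tnth_mktuple (root_substC, root_substXU).
Qed.

Lemma root_subst_id (p : {mpoly int[n]}) : root_subst p = map_mpoly intr p.
Proof.
apply: eq_mmap => [a|i] /=; first by rewrite rmorph_int.
have lt_iM : (i < M)%N := leq_trans (ltn_ord i) leq_nM.
by rewrite /root_subst_var lt_iM divn_small // modn_small // valK expr0 scale1r.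
Qed.

End RootSubst.

Theorem lemma3p3 (ns : nat -> nat)
  (hpos : forall i, (0 < ns i)%N)
  (hlim : forall M : nat, exists I : nat, forall i, (I <= i)%N -> (M <= ns i)%N)
  (N : nat) (p : {mpoly int[N]}) :
  (forall i, in_ILambda (ns i) p) -> p = 0.
Proof.
move=> p_in.
pose m := (msize p).+1.
have [w w_prim] := C_prim_root_exists (ltn0Sn (msize p)).
have [I le_ns] := hlim (N * m)%N.
have [q [q_in same_pq]] := p_in I.
have := congr1 (@root_subst _ N m w _) same_pq.
rewrite !root_subst_widen root_subst_id // => subst_pq.
apply: vanish_below_msize_eq0 => b lt_b.
apply/eqP; rewrite -(intr_eq0 algC) -mcoeff_map_mpoly subst_pq.
by rewrite (vanish_below_root_subst w_prim (le_ns I (leqnn I)) q_in) //; lia.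
Qed.
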